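(* Let $(X,\mathscr B,\mu,T)$ be a 1-step Markov shift and $\alpha$ its finite time-0 generating partition. Let $c_S^n=2^{-n}$ for all $S\subset n^*$. Then $$\operatorname{Asc}_\mu(X,\alpha,T)=\frac12\sum_{i=1}^\infty\frac1{2^i}H_\mu(\alpha\mid\alpha_i).$$
   Context: A 1-step Markov shift: $X=\mathcal A^{\mathbb Z}$ for a finite alphabet $\mathcal A$, $T$ the shift, $\mu$ the shift-invariant Markov measure determined by a stochastic matrix $P$ and a $P$-fixed probability vector $p$ ($\mu\{x_i=j_0,\dots,x_{i+k}=j_k\}=p_{j_0}P_{j_0j_1}\cdots P_{j_{k-1}j_k}$). The time-0 partition is $\alpha=\{\{x:x_0=a\}:a\in\mathcal A\}$; $\alpha_i=T^{-i}\alpha$, and for $S\subset n^*=\{0,\dots,n-1\}$, $\alpha_S=\bigvee_{i\in S}T^{-i}\alpha$. $H_\mu(\alpha\mid\beta)$ is conditional entropy. $\operatorname{Asc}_\mu(X,\alpha,T)=\lim_{n\to\infty}\frac1n\sum_{S\subset n^*}c_S^nH_\mu(\alpha_S)$. *)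

From HB Require Import structures.
From mathcomp Require Import all_boot all_order all_algebra.
From mathcomp Require Import all_classical all_reals all_analysis.
Set Implicit Arguments. Unset Strict Implicit. Unset Printing Implicit Defensive.
Import Order.TTheory GRing.Theory Num.Theory.
Local Open Scope ring_scope.

Section MarkovShift.
Variables (R : realType) (A : finType) (p : A -> R) (P : A -> A -> R).

Definition stochastic_matrix : Prop :=
  (forall a b, 0 <= P a b) /\ (forall a, \sum_(b : A) P a b = 1).
Definition stationary_prob_vector : Prop :=
  (forall a, 0 <= p a) /\ \sum_(a : A) p a = 1 /\
  (forall b, \sum_(a : A) p a * P a b = p b).

Fixpoint path_prod (a : A) (s : seq A) : R :=
  if s is b :: t then P a b * path_prod b t else 1.

(* mu{x_i = j_0, ..., x_{i+k} = j_k} = p_{j0} P_{j0 j1} ... P_{j_{k-1} j_k}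
   (independent of i); the empty word has measure 1. *)
Definition mu_word (s : seq A) : R :=
  if s is a :: t then p a * path_prod a t else 1.

(* Measure of an event depending only on coordinates 0..n-1
   (a union of cylinders over the window n* = {0,...,n-1}). *)
Definition mu_win (n : nat) (E : pred (n.-tuple A)) : R :=
  \sum_(w : n.-tuple A | E w) mu_word w.

(* The atom of alpha_S = \/_{i in S} T^{-i} alpha labelled by f : S -> A,
   i.e. the set {x : x_i = f i for all i in S}. *)
Definition mu_atom (n : nat) (S : {set 'I_n})
  (f : {ffun {i : 'I_n | i \in S} -> A}) : R :=
  mu_win (fun w : n.-tuple A => [forall i : {i : 'I_n | i \in S}, tnth w (val i) == f i]).

Definition H_alpha (n : nat) (S : {set 'I_n}) : R :=
  - \sum_(f : {ffun {i : 'I_n | i \in S} -> A})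
      (if mu_atom f == 0 then 0 else mu_atom f * ln (mu_atom f)).

Definition H_alpha_given_alpha_i (i : nat) : R :=
  - \sum_(a : A) \sum_(b : A)
      (let q := mu_win (fun w : i.+1.-tuple A =>
                   (tnth w ord0 == a) && (tnth w ord_max == b)) in
       let r := mu_win (fun w : i.+1.-tuple A => tnth w ord_max == b) in
       if q == 0 then 0 else q * ln (q / r)).

(* The averaged sequence (1/n) sum_{S subset n*} c_S^n H_mu(alpha_S);
   Asc is its limit as n -> oo. *)
Definition asc_seq (c : forall n : nat, {set 'I_n} -> R) (n : nat) : R :=
  n%:R^-1 * \sum_(S : {set 'I_n}) c n S * H_alpha S.

End MarkovShift.

(** Write [S = {s_1 < ... < s_k}]. By the Markov property an atom of [alpha_S] has
    measure [p(a_1) P^(s_2 - s_1)(a_1, a_2) ... P^(s_k - s_(k-1))(a_(k-1), a_k)], so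
    [H(alpha_S) = H(alpha) + sum_j H(alpha | alpha_(s_(j+1) - s_j))]. A gap [d] occurs
    between consecutive elements of exactly [(n - d) 2^(n-d-1)] subsets [S] of [n*], hence
    [2^-n sum_S H(alpha_S) = (1 - 2^-n) H(alpha) + sum_(d < n) (n - d) 2^(-d-1) H(alpha | alpha_d)].
    Dividing by [n], the right-hand side is [1/2 sum_(d < n) 2^-d H(alpha | alpha_d)] up to
    an [O(1/n)] error, since the conditional entropies are bounded. *)

From HB Require Import structures.
From mathcomp Require Import all_boot all_order all_algebra.
From mathcomp Require Import all_classical all_reals all_analysis.
From mathcomp Require Import ring lra.
Set Implicit Arguments. Unset Strict Implicit. Unset Printing Implicit Defensive.
Import Order.TTheory GRing.Theory Num.Theory.
Import numFieldNormedType.Exports.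
Local Open Scope classical_set_scope.
Local Open Scope ring_scope.

Lemma big_tuple_cons (V : nmodType) (T : finType) (n : nat) (F : n.+1.-tuple T -> V) :
  \sum_(w : n.+1.-tuple T) F w = \sum_(b : T) \sum_(w : n.-tuple T) F (cons_tuple b w).
Proof.
rewrite pair_big /= (reindex (fun x : T * n.-tuple T => cons_tuple x.1 x.2)) //.
exists (fun w : n.+1.-tuple T => (thead w, behead_tuple w)).
- by case=> b w _; congr pair; apply: val_inj.
- by move=> w _; case/tupleP: w => b w; apply: val_inj.
Qed.

Lemma big_tuple0 (V : nmodType) (T : finType) (F : 0.-tuple T -> V) :
  \sum_(w : 0.-tuple T) F w = F [tuple].
Proof. by rewrite (big_pred1 [tuple]) // => w /=; apply/esym/eqP/val_inj; rewrite /= tuple0. Qed.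

Lemma big_option (V : nmodType) (T : finType) (F : option T -> V) :
  \sum_(x : option T) F x = F None + \sum_(a : T) F (Some a).
Proof.
transitivity (\sum_(x <- None :: map Some (enum T)) F x).
  apply: perm_big; apply: uniq_perm.
  - exact: index_enum_uniq.
  - rewrite /= map_inj_uniq ?enum_uniq ?andbT; last by move=> x y [].
    by apply/negP => /mapP [].
  - by case=> [a|]; rewrite mem_index_enum /= ?in_cons //= mem_map ?mem_enum //; move=> x y [].
by rewrite big_cons big_map big_enum.
Qed.

Lemma all2_tnth (S U : Type) (r : S -> U -> bool) n (s : n.-tuple S) (t : n.-tuple U) :
  all2 r s t = [forall j, r (tnth s j) (tnth t j)].
Proof.
elim: n s t => [|n IH] s t.
  by rewrite tuple0 (tuple0 t) /=; apply/esym/forallP => -[].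
case/tupleP: s => x s; case/tupleP: t => y t /=.
rewrite IH; apply/andP/forallP.
- by case=> H0 /forallP H i; case: (unliftP ord0 i) => [j ->|->]; rewrite ?tnthS ?tnth0.
- move=> H; split; first by have := H ord0; rewrite !tnth0.
  by apply/forallP => j; have := H (lift ord0 j); rewrite !tnthS.
Qed.

Section Xlnx.
Variable R : realType.

Definition xlnx (x : R) : R := if x == 0 then 0 else x * ln x.

Lemma xlnx0 : xlnx 0 = 0. Proof. by rewrite /xlnx eqxx. Qed.

Lemma xlnx1 : xlnx 1 = 0. Proof. by rewrite /xlnx oner_eq0 ln1 mulr0. Qed.

Lemma xlnxM x y : 0 <= x -> 0 <= y -> xlnx (x * y) = x * xlnx y + y * xlnx x.
Proof.
rewrite le0r => /orP [/eqP ->|x0]; first by rewrite mul0r xlnx0 mul0r mulr0 addr0.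
rewrite le0r => /orP [/eqP ->|y0]; first by rewrite mulr0 xlnx0 mul0r mulr0 addr0.
rewrite /xlnx (gt_eqF (mulr_gt0 x0 y0)) (gt_eqF x0) (gt_eqF y0) lnM ?posrE //.
ring.
Qed.

Lemma xlnx_le0 x : 0 <= x -> x <= 1 -> xlnx x <= 0.
Proof. by move=> x0 x1; rewrite /xlnx; case: ifP => // _; rewrite mulr_ge0_le0 // ln_le0. Qed.

(* From [ln (1/x) <= 1/x - 1]; the sharp bound is [-1/e]. *)
Lemma xlnx_geN1 x : 0 <= x -> -1 <= xlnx x.
Proof.
rewrite le0r => /orP [/eqP ->|x0]; first by rewrite xlnx0 lerN10.
rewrite /xlnx (gt_eqF x0).
have lnV_le : - ln x <= x^-1 - 1.
  have := @le_ln1Dx R (x^-1 - 1); rewrite addrCA subrr addr0 lnV ?posrE //; apply.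
  by rewrite ltrBrDl subrr invr_gt0.
have := ler_wpM2l (ltW x0) lnV_le; rewrite mulrN mulrBr mulfV ?gt_eqF // mulr1.
have := ltW x0; lra.
Qed.

End Xlnx.

Section GeometricSums.
Variable R : realFieldType.

Lemma sum_inv_pow2 n : \sum_(j < n) (2 ^+ j.+1)^-1 = 1 - (2 ^+ n)^-1 :> R.
Proof.
elim: n => [|n IH]; first by rewrite big_ord0 expr0 invr1 subrr.
by rewrite big_ord_recr /= IH !exprS; field; rewrite expf_neq0 ?pnatr_eq0.
Qed.

Lemma sum_nat_div_pow2 n : \sum_(j < n) j.+1%:R / 2 ^+ j.+1 = 2 - n.+2%:R / 2 ^+ n :> R.
Proof.
elim: n => [|n IH]; first by rewrite big_ord0 expr0 divr1 subrr.
by rewrite big_ord_recr /= IH !exprS -!natr1; field; rewrite expf_neq0 ?pnatr_eq0.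
Qed.

End GeometricSums.

Section MarkovShift.
Variables (R : realType) (A : finType) (p : A -> R) (P : A -> A -> R).
Hypothesis P_stochastic : stochastic_matrix P.
Hypothesis p_stationary : stationary_prob_vector p P.

Lemma P_ge0 a b : 0 <= P a b. Proof. by case: P_stochastic. Qed.
Lemma sum_P_row a : \sum_b P a b = 1. Proof. by case: P_stochastic. Qed.
Lemma p_ge0 a : 0 <= p a. Proof. by case: p_stationary. Qed.
Lemma sum_p : \sum_a p a = 1. Proof. by case: p_stationary => _ []. Qed.
Lemma sum_pP b : \sum_a p a * P a b = p b. Proof. by case: p_stationary => _ []. Qed.

Lemma p_le1 a : p a <= 1.
Proof. by rewrite -sum_p (bigD1 a) //= lerDl sumr_ge0 // => c _; apply: p_ge0. Qed.

Fixpoint Ppow (d : nat) (a b : A) : R :=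
  if d is d'.+1 then \sum_c Ppow d' a c * P c b else (a == b)%:R.

Lemma sum_Ppow0 (f : A -> R) a : \sum_c Ppow 0 a c * f c = f a.
Proof.
rewrite (bigD1 a) //= eqxx mul1r big1 ?addr0 // => c /negbTE.
by rewrite eq_sym => ->; rewrite mul0r.
Qed.

Lemma sum_PpowS d a (f : A -> R) :
  \sum_c Ppow d a c * \sum_b P c b * f b = \sum_b Ppow d.+1 a b * f b.
Proof.
under eq_bigr do rewrite mulr_sumr.
rewrite exchange_big /=; apply: eq_bigr => b _.
by rewrite mulr_suml; apply: eq_bigr => c _; rewrite mulrA.
Qed.

Lemma Ppow_ge0 d a b : 0 <= Ppow d a b.
Proof.
elim: d b => [|d IH] b /=; first by rewrite ler0n.
by apply: sumr_ge0 => c _; rewrite mulr_ge0 ?P_ge0.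
Qed.

Lemma sum_Ppow_row d a : \sum_b Ppow d a b = 1.
Proof.
elim: d => [|d IH].
  by rewrite -[RHS](sum_Ppow0 (fun=> 1) a); apply: eq_bigr => c _; rewrite mulr1.
rewrite /= exchange_big /= -[RHS]IH; apply: eq_bigr => c _.
by rewrite -mulr_sumr sum_P_row mulr1.
Qed.

Lemma Ppow_le1 d a b : Ppow d a b <= 1.
Proof.
by rewrite -(sum_Ppow_row d a) (bigD1 b) //= lerDl sumr_ge0 // => c _; apply: Ppow_ge0.
Qed.

Lemma sum_pPpow d b : \sum_a p a * Ppow d a b = p b.
Proof.
elim: d b => [|d IH] b /=.
  by rewrite (bigD1 b) //= eqxx mulr1 big1 ?addr0 // => c /negbTE ->; rewrite mulr0.
under eq_bigr do rewrite mulr_sumr.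
rewrite exchange_big /= -[RHS]sum_pP; apply: eq_bigr => c _.
by rewrite -IH mulr_suml; apply: eq_bigr => a _; rewrite mulrA.
Qed.

(* A pattern [o] prescribes the state at the positions where it is [Some _]; the
   atoms of the partitions [alpha_S], [S] ranging over the subsets of [n*], are
   exactly the patterns of length [n]. *)
Definition matches (x : option A) (b : A) : bool :=
  if x is Some a then b == a else true.

(* [pattern_weight d a o]: probability of [o] given that the last prescribed
   state [a] was seen [d] steps before the first position of [o]. *)
Fixpoint pattern_weight (d : nat) (a : A) (o : seq (option A)) : R :=
  match o with
  | [::] => 1
  | None :: o' => pattern_weight d.+1 a o'
  | Some b :: o' => Ppow d a b * pattern_weight 1 b o'
  end.

Fixpoint pattern_measure (o : seq (option A)) : R :=
  match o with
  | [::] => 1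
  | None :: o' => pattern_measure o'
  | Some a :: o' => p a * pattern_weight 1 a o'
  end.

Lemma pattern_weight_ge0 o d a : 0 <= pattern_weight d a o.
Proof. by elim: o d a => [|[b|] o IH] d a //=; rewrite ?mulr_ge0 ?Ppow_ge0. Qed.

Definition path_mass (c : A) (o : seq (option A)) : R :=
  \sum_(w : (size o).-tuple A | all2 matches o w) path_prod P c w.

Lemma path_mass_nil c : path_mass c [::] = 1.
Proof. by rewrite /path_mass big_mkcond /= big_tuple0. Qed.

Lemma path_mass_cons c x o :
  path_mass c (x :: o) = \sum_(b | matches x b) P c b * path_mass b o.
Proof.
rewrite /path_mass big_mkcond /= big_tuple_cons [RHS]big_mkcond /=.
apply: eq_bigr => b _ /=; case: (matches x b) => /=; last by rewrite big1.
by rewrite mulr_sumr [RHS]big_mkcond; apply: eq_bigr => w _; case: ifP; rewrite ?mulr0.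
Qed.

Lemma sum_Ppow_path_mass o d a :
  \sum_c Ppow d a c * path_mass c o = pattern_weight d.+1 a o.
Proof.
elim: o d a => [|x o IH] d a.
  by under eq_bigr do rewrite path_mass_nil mulr1; rewrite sum_Ppow_row.
under eq_bigr do rewrite path_mass_cons.
case: x => [e|] /=; last by rewrite sum_PpowS IH.
under eq_bigr do rewrite big_pred1_eq mulrA.
by rewrite -mulr_suml -(IH 0%N e) sum_Ppow0.
Qed.

Lemma path_massE o a : path_mass a o = pattern_weight 1 a o.
Proof. by rewrite -sum_Ppow_path_mass sum_Ppow0. Qed.

Lemma sum_p_path_mass o : \sum_b p b * path_mass b o = pattern_measure o.
Proof.
elim: o => [|x o IH].
  by under eq_bigr do rewrite path_mass_nil mulr1; rewrite sum_p.
under eq_bigr do rewrite path_mass_cons.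
case: x => [a|] /=.
  under eq_bigr do rewrite big_pred1_eq mulrA.
  by rewrite -mulr_suml sum_pP path_massE.
under eq_bigr do rewrite mulr_sumr.
rewrite exchange_big /= -IH; apply: eq_bigr => c _.
by rewrite -[in RHS]sum_pP mulr_suml; apply: eq_bigr => b _; rewrite mulrA.
Qed.

Lemma mu_win_pattern n (o : seq (option A)) : size o = n ->
  mu_win p P (fun w : n.-tuple A => all2 matches o w) = pattern_measure o.
Proof.
move=> <-; case: o => [|x o]; first by rewrite /mu_win big_mkcond /= big_tuple0.
rewrite /mu_win big_mkcond /= big_tuple_cons.
transitivity (\sum_(b | matches x b) p b * path_mass b o).
  rewrite [RHS]big_mkcond; apply: eq_bigr => b _ /=.
  case: (matches x b) => /=; last by rewrite big1.
  rewrite mulr_sumr /path_mass [RHS]big_mkcond.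
  by apply: eq_bigr => w _; case: ifP; rewrite ?mulr0.
by case: x => [a|] /=; rewrite ?big_pred1_eq ?path_massE ?sum_p_path_mass.
Qed.

Section Atoms.
Variables (n : nat) (S : {set 'I_n}).

Definition pattern_of_atom (f : {ffun {i : 'I_n | i \in S} -> A}) : n.-tuple (option A) :=
  [tuple omap f (insub j) | j < n].

Definition pattern_support (o : n.-tuple (option A)) : {set 'I_n} :=
  [set j | tnth o j != None].

Lemma pattern_support_of_atom f : pattern_support (pattern_of_atom f) = S.
Proof.
apply/setP => j; rewrite inE tnth_mktuple.
by case: insubP => [u uS _|jS] /=; [rewrite uS | rewrite (negbTE jS)].
Qed.

Lemma mu_atom_pattern f : mu_atom p P f = pattern_measure (pattern_of_atom f).
Proof.
rewrite -(mu_win_pattern (size_tuple _)); apply: eq_bigl => w.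
rewrite all2_tnth; apply/forallP/forallP => H j.
  by rewrite tnth_mktuple; case: insubP => [u uS <-|] //=; apply: H.
by have := H (val j); rewrite tnth_mktuple valK.
Qed.

Lemma sum_xlnx_atoms :
  \sum_(f : {ffun {i : 'I_n | i \in S} -> A}) xlnx (mu_atom p P f) =
  \sum_(o : n.-tuple (option A) | pattern_support o == S) xlnx (pattern_measure o).
Proof.
have [a0 _] : exists a0 : A, true.
  case: (pickP A) => [a0 _|A0]; first by exists a0.
  by have := sum_p; rewrite big_pred0 // => /esym/eqP; rewrite oner_eq0.
pose atom_of o := [ffun i : {i : 'I_n | i \in S} => odflt a0 (tnth o (val i))].
rewrite (reindex_onto pattern_of_atom atom_of) => [|o /eqP suppS].
  apply: eq_big => f; last by rewrite mu_atom_pattern.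
  rewrite pattern_support_of_atom eqxx /=; apply/esym/eqP/ffunP => i.
  by rewrite ffunE tnth_mktuple valK.
apply: eq_from_tnth => j; rewrite tnth_mktuple.
case: insubP => [u uS Hj|jS] /=.
  rewrite ffunE Hj; have : j \in pattern_support o by rewrite suppS.
  by rewrite inE; case: (tnth o j).
by move: jS; rewrite -suppS inE negbK => /eqP ->.
Qed.

End Atoms.

Definition measure_xlnx (n : nat) : R :=
  \sum_(o : n.-tuple (option A)) xlnx (pattern_measure o).

Lemma sum_H_alpha n : \sum_(S : {set 'I_n}) H_alpha p P S = - measure_xlnx n.
Proof.
transitivity (\sum_(S : {set 'I_n}) - \sum_(f : {ffun {i : 'I_n | i \in S} -> A})
                 xlnx (mu_atom p P f)) => //.
rewrite sumrN; congr (- _); under eq_bigr do rewrite sum_xlnx_atoms.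
by rewrite /measure_xlnx (partition_big (@pattern_support n) predT).
Qed.

Definition entropy_p : R := - \sum_a xlnx (p a).
Definition cond_entropy (d : nat) : R := - \sum_a p a * \sum_b xlnx (Ppow d a b).

Definition weight_xlnx (d : nat) (a : A) (n : nat) : R :=
  \sum_(o : n.-tuple (option A)) xlnx (pattern_weight d a o).
Definition mean_weight_xlnx (d n : nat) : R := \sum_a p a * weight_xlnx d a n.

Lemma sum_pattern_weight n d a : \sum_(o : n.-tuple (option A)) pattern_weight d a o = 2 ^+ n.
Proof.
elim: n d a => [|n IH] d a; first by rewrite big_tuple0 expr0.
rewrite big_tuple_cons big_option /= IH.
under eq_bigr do rewrite -mulr_sumr IH.
by rewrite -mulr_suml sum_Ppow_row mul1r exprS; ring.
Qed.

Lemma weight_xlnxS n d a : weight_xlnx d a n.+1 =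
  weight_xlnx d.+1 a n + \sum_b (Ppow d a b * weight_xlnx 1 b n + xlnx (Ppow d a b) * 2 ^+ n).
Proof.
rewrite /weight_xlnx big_tuple_cons big_option /=; congr (_ + _); apply: eq_bigr => b _.
under eq_bigr do rewrite xlnxM ?Ppow_ge0 ?pattern_weight_ge0 //.
by rewrite big_split /= -mulr_sumr -mulr_suml sum_pattern_weight (mulrC (2 ^+ n)).
Qed.

Lemma mean_weight_xlnx0 d : mean_weight_xlnx d 0 = 0.
Proof.
by rewrite /mean_weight_xlnx big1 // => a _; rewrite /weight_xlnx big_tuple0 /= xlnx1 mulr0.
Qed.

Lemma mean_weight_xlnxS d n : mean_weight_xlnx d n.+1 =
  mean_weight_xlnx d.+1 n + mean_weight_xlnx 1 n - 2 ^+ n * cond_entropy d.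
Proof.
rewrite /mean_weight_xlnx /cond_entropy.
under eq_bigr do rewrite weight_xlnxS mulrDr big_split /= mulrDr.
rewrite !big_split /= addrA mulrN opprK; congr (_ + _ + _).
  under eq_bigr do rewrite mulr_sumr.
  rewrite exchange_big /=; apply: eq_bigr => b _.
  by rewrite -(sum_pPpow d b) mulr_suml; apply: eq_bigr => a _; rewrite mulrA.
rewrite mulr_sumr; apply: eq_bigr => a _; rewrite !mulr_sumr; apply: eq_bigr => b _.
ring.
Qed.

Lemma measure_xlnxS n :
  measure_xlnx n.+1 = measure_xlnx n + mean_weight_xlnx 1 n - 2 ^+ n * entropy_p.
Proof.
rewrite /measure_xlnx big_tuple_cons big_option /= -addrA mulrN opprK; congr (_ + _).
rewrite /mean_weight_xlnx mulr_sumr -big_split /=; apply: eq_bigr => a _.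
under eq_bigr do rewrite xlnxM ?p_ge0 ?pattern_weight_ge0 //.
by rewrite big_split /= -mulr_sumr -mulr_suml sum_pattern_weight mulrC.
Qed.

(* [lag_weight (n - d)] counts the sets [S] of [n*] having two consecutive
   elements at distance [d]: [n - d] positions for the pair, [2 ^ (n - d - 1)]
   choices outside the gap. *)
Definition lag_weight (k : nat) : R := k%:R * 2 ^+ k / 2.

Definition weighted_cond_sum (n : nat) : R :=
  \sum_(j < n) cond_entropy j.+1 * lag_weight (n - j.+1).

Definition lagged_cond_sum (d m : nat) : R :=
  \sum_(j < m) cond_entropy (d + j) * 2 ^+ (m - j.+1).

Lemma lag_weight0 : lag_weight 0 = 0.
Proof. by rewrite /lag_weight !mul0r. Qed.

Lemma lag_weightS k : lag_weight k.+1 = 2 * lag_weight k + 2 ^+ k.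
Proof. by rewrite /lag_weight exprS -addn1 natrD; field. Qed.

Lemma lagged_cond_sumS d m :
  lagged_cond_sum d m.+1 = cond_entropy d * 2 ^+ m + lagged_cond_sum d.+1 m.
Proof.
rewrite /lagged_cond_sum big_ord_recl /= addn0 subn1 /=; congr (_ + _).
by apply: eq_bigr => j _; rewrite /bump /= add1n addnS addSn subSS.
Qed.

Lemma weighted_cond_sumS m :
  weighted_cond_sum m.+1 = 2 * weighted_cond_sum m + lagged_cond_sum 1 m.
Proof.
rewrite /weighted_cond_sum /lagged_cond_sum big_ord_recr /= subnn lag_weight0 mulr0.
rewrite addr0 mulr_sumr -big_split /=; apply: eq_bigr => j _.
by rewrite subSS -subnSK // lag_weightS add1n; ring.
Qed.

Lemma mean_weight_xlnxE m d :
  mean_weight_xlnx d m = - (lagged_cond_sum d m + weighted_cond_sum m).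
Proof.
elim: m d => [|m IH] d.
  by rewrite mean_weight_xlnx0 /lagged_cond_sum /weighted_cond_sum !big_ord0 addr0 oppr0.
by rewrite mean_weight_xlnxS !IH lagged_cond_sumS weighted_cond_sumS; ring.
Qed.

Lemma measure_xlnxE n :
  measure_xlnx n = - ((2 ^+ n - 1) * entropy_p + weighted_cond_sum n).
Proof.
elim: n => [|n IH].
  by rewrite /measure_xlnx big_tuple0 /= xlnx1 /weighted_cond_sum big_ord0 expr0; ring.
by rewrite measure_xlnxS IH mean_weight_xlnxE weighted_cond_sumS exprS; ring.
Qed.

Lemma sum_H_alphaE n :
  \sum_(S : {set 'I_n}) H_alpha p P S = (2 ^+ n - 1) * entropy_p + weighted_cond_sum n.
Proof. by rewrite sum_H_alpha measure_xlnxE opprK. Qed.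

Lemma pattern_weight_gap k d a o :
  pattern_weight d a (nseq k None ++ o) = pattern_weight (d + k) a o.
Proof. by elim: k d => [|k IH] d /=; rewrite ?addn0 // IH addSnnS. Qed.

Lemma pattern_measure_gap k o : pattern_measure (nseq k None ++ o) = pattern_measure o.
Proof. by elim: k. Qed.

Lemma all2_matches_last k (w : seq A) b : size w = k.+1 ->
  all2 matches (nseq k None ++ [:: Some b]) w = (nth b w k == b).
Proof.
elim: k w => [|k IH] [|x w] //=; first by case: w => //= _; rewrite andbT.
by case=> /IH.
Qed.

Lemma mu_win_ends i a b :
  mu_win p P (fun w : i.+2.-tuple A => (tnth w ord0 == a) && (tnth w ord_max == b)) =
  p a * Ppow i.+1 a b.
Proof.
transitivity (mu_win p P (fun w : i.+2.-tuple A =>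
                all2 matches (Some a :: nseq i None ++ [:: Some b]) w)).
  apply: eq_bigl => w; case/tupleP: w => x w.
  by rewrite tnth0 (tnth_nth b) /= all2_matches_last ?size_tuple.
rewrite (@mu_win_pattern i.+2); last by rewrite /= size_cat size_nseq addn1.
by rewrite /= pattern_weight_gap /= mulr1.
Qed.

Lemma mu_win_last i b : mu_win p P (fun w : i.+2.-tuple A => tnth w ord_max == b) = p b.
Proof.
transitivity (mu_win p P (fun w : i.+2.-tuple A =>
                all2 matches (nseq i.+1 None ++ [:: Some b]) w)).
  by apply: eq_bigl => w; rewrite (tnth_nth b) all2_matches_last ?size_tuple.
rewrite (@mu_win_pattern i.+2); last by rewrite size_cat size_nseq addn1.
by rewrite pattern_measure_gap /= mulr1.
Qed.

Lemma xlnx_cond_ratio d a b :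
  (if p a * Ppow d a b == 0 then 0 else p a * Ppow d a b * ln (p a * Ppow d a b / p b)) =
  p a * Ppow d a b * ln (p a) + p a * xlnx (Ppow d a b) - p a * Ppow d a b * ln (p b).
Proof.
have joint_le : p a * Ppow d a b <= p b.
  rewrite -(sum_pPpow d b) (bigD1 a) //= lerDl sumr_ge0 // => c _.
  by rewrite mulr_ge0 ?p_ge0 ?Ppow_ge0.
case: ifP => [/eqP|/negbT joint0].
  by move/eqP; rewrite mulf_eq0 => /orP [] /eqP ->; rewrite ?xlnx0; ring.
move: (joint0); rewrite mulf_eq0 negb_or => /andP [pa0 Pab0].
have pa_gt0 : 0 < p a by rewrite lt0r pa0 p_ge0.
have Pab_gt0 : 0 < Ppow d a b by rewrite lt0r Pab0 Ppow_ge0.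
have pb_gt0 : 0 < p b by apply: lt_le_trans joint_le; rewrite mulr_gt0.
by rewrite ln_div ?posrE ?mulr_gt0 // lnM ?posrE // /xlnx (negbTE Pab0); ring.
Qed.

Lemma H_alpha_given_alpha_iE i : H_alpha_given_alpha_i p P i.+1 = cond_entropy i.+1.
Proof.
rewrite /H_alpha_given_alpha_i /cond_entropy; congr (- _).
under eq_bigr do under eq_bigr do rewrite mu_win_ends mu_win_last xlnx_cond_ratio.
(* Both marginals of the law of [(x_0, x_(i+1))] are [p], so the [ln p] terms cancel. *)
have marginal0 : \sum_a \sum_b p a * Ppow i.+1 a b * ln (p a) = \sum_a p a * ln (p a).
  by apply: eq_bigr => a _; under eq_bigr do rewrite mulrAC; rewrite -mulr_sumr sum_Ppow_row mulr1.
have marginal1 : \sum_a \sum_b - (p a * Ppow i.+1 a b * ln (p b)) = - \sum_a p a * ln (p a).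
  under eq_bigr do rewrite sumrN.
  rewrite sumrN exchange_big; congr (- _); apply: eq_bigr => b _.
  by rewrite -mulr_suml sum_pPpow.
under eq_bigr do rewrite !big_split.
rewrite !big_split /= marginal0 marginal1 addrAC subrr add0r.
by apply: eq_bigr => a _; rewrite mulr_sumr.
Qed.

Lemma entropy_p_ge0 : 0 <= entropy_p.
Proof. by rewrite oppr_ge0 sumr_le0 // => a _; rewrite xlnx_le0 ?p_ge0 ?p_le1. Qed.

Lemma cond_entropy_ge0 d : 0 <= cond_entropy d.
Proof.
rewrite oppr_ge0 sumr_le0 // => a _; rewrite mulr_ge0_le0 ?p_ge0 //.
by rewrite sumr_le0 // => b _; rewrite xlnx_le0 ?Ppow_ge0 ?Ppow_le1.
Qed.

Lemma cond_entropy_le_card d : cond_entropy d <= #|A|%:R.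
Proof.
rewrite lerNl; apply: (@le_trans _ _ (\sum_a p a * - #|A|%:R)).
  by rewrite -mulr_suml sum_p mul1r.
apply: ler_sum => a _; apply: ler_wpM2l; first exact: p_ge0.
apply: (@le_trans _ _ (\sum_(b : A) (-1 : R))); first by rewrite sumr_const mulNrn.
by apply: ler_sum => b _; apply: xlnx_geN1; apply: Ppow_ge0.
Qed.

Definition cond_term (j : nat) : R := cond_entropy j.+1 / 2 ^+ j.+1.

Lemma cond_term_ge0 j : 0 <= cond_term j.
Proof. by rewrite divr_ge0 ?cond_entropy_ge0 ?exprn_ge0. Qed.

Lemma cond_term_le j : cond_term j <= #|A|%:R / 2 ^+ j.+1.
Proof. by rewrite ler_wpM2r ?cond_entropy_le_card // invr_ge0 exprn_ge0. Qed.

Definition cond_series (N : nat) : R :=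
  \sum_(1 <= i < N) 2 ^- i * H_alpha_given_alpha_i p P i.

Lemma cond_seriesS n : cond_series n.+1 = \sum_(j < n) cond_term j.
Proof.
rewrite /cond_series big_add1 /= big_mkord; apply: eq_bigr => j _.
by rewrite H_alpha_given_alpha_iE mulrC.
Qed.

Lemma cond_series_le_card n : cond_series n <= #|A|%:R.
Proof.
case: n => [|n]; first by rewrite /cond_series big_geq.
rewrite cond_seriesS; apply: (@le_trans _ _ (\sum_(j < n) #|A|%:R / 2 ^+ j.+1)).
  by apply: ler_sum => j _; apply: cond_term_le.
by rewrite -mulr_sumr sum_inv_pow2 ler_piMr // gerBl invr_ge0 exprn_ge0.
Qed.

Lemma nondecreasing_cond_series : nondecreasing_seq cond_series.
Proof.
apply/nondecreasing_seqP; case=> [|n]; first by rewrite /cond_series !big_geq.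
by rewrite !cond_seriesS big_ord_recr /= lerDl cond_term_ge0.
Qed.

Lemma is_cvg_cond_series : cvgn cond_series.
Proof.
apply: nondecreasing_is_cvgn; first exact: nondecreasing_cond_series.
by exists #|A|%:R => _ [n _ <-]; apply: cond_series_le_card.
Qed.

Definition cond_moment (n : nat) : R := \sum_(j < n) j.+1%:R * cond_term j.

Lemma cond_moment_ge0 n : 0 <= cond_moment n.
Proof. by rewrite sumr_ge0 // => j _; rewrite mulr_ge0 ?cond_term_ge0. Qed.

Lemma cond_moment_le n : cond_moment n <= 2 * #|A|%:R.
Proof.
apply: (@le_trans _ _ (#|A|%:R * \sum_(j < n) j.+1%:R / 2 ^+ j.+1)).
  by rewrite mulr_sumr; apply: ler_sum => j _; rewrite [leRHS]mulrCA ler_wpM2l ?cond_term_le.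
by rewrite sum_nat_div_pow2 mulrBr [_ * 2]mulrC gerBl mulr_ge0 // divr_ge0 ?exprn_ge0.
Qed.

Lemma weighted_cond_sum_scaled n :
  n%:R^-1 * (2 ^- n * weighted_cond_sum n) =
  2^-1 * \sum_(j < n) cond_term j - n%:R^-1 * (2^-1 * cond_moment n).
Proof.
rewrite /weighted_cond_sum /cond_moment !mulr_sumr -sumrB; apply: eq_bigr => j _.
have jn : (j.+1 <= n)%N := ltn_ord j.
have n0 : n%:R != 0 :> R by rewrite pnatr_eq0 -lt0n (leq_trans _ jn).
have pow2_split : (2 : R) ^+ n = 2 ^+ (n - j.+1) * 2 ^+ j.+1 by rewrite -exprD subnK.
rewrite /lag_weight /cond_term natrB // pow2_split.
by field; rewrite n0 !expf_neq0 ?pnatr_eq0.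
Qed.

Definition asc_remainder (n : nat) : R := (1 - 2 ^- n) * entropy_p - 2^-1 * cond_moment n.

Lemma asc_seqE n : asc_seq p P (fun n (_ : {set 'I_n}) => (2 : R) ^- n) n =
  2^-1 * cond_series n.+1 + n%:R^-1 * asc_remainder n.
Proof.
rewrite /asc_seq -mulr_sumr sum_H_alphaE !mulrDr weighted_cond_sum_scaled cond_seriesS.
have -> : 2 ^- n * ((2 ^+ n - 1) * entropy_p) = (1 - 2 ^- n) * entropy_p :> R.
  by rewrite mulrA mulrBr mulVf ?mulr1 // expf_neq0 ?pnatr_eq0.
by rewrite /asc_remainder; ring.
Qed.

Lemma asc_remainder_bounds n : - #|A|%:R <= asc_remainder n <= entropy_p.
Proof.
have u_ge0 : 0 <= 2 ^- n :> R by rewrite invr_ge0 exprn_ge0.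
have u_le1 : 2 ^- n <= 1 :> R by rewrite invf_le1 ?exprn_gt0 // exprn_ege1 // ler1n.
have := entropy_p_ge0; have := cond_moment_ge0 n; have := cond_moment_le n.
rewrite /asc_remainder; move: u_ge0 u_le1.
set u := 2 ^- n; set H := entropy_p; set m := cond_moment n => *.
apply/andP; split; nra.
Qed.

Lemma cvg_asc_remainder : (fun n => n%:R^-1 * asc_remainder n) @ \oo --> (0 : R).
Proof.
have inv_cvg0 : (fun n : nat => (n%:R : R)^-1) @ \oo --> 0.
  by rewrite -cvg_shiftS; apply: cvg_harmonic.
apply: (@squeeze_cvgr _ _ _ _ (fun n => n%:R^-1 * - #|A|%:R) (fun n => n%:R^-1 * entropy_p)).
- apply: nearW => n /=; have /andP [lo hi] := asc_remainder_bounds n.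
  by rewrite !ler_wpM2l ?invr_ge0.
- by rewrite -(mul0r (- #|A|%:R)); apply: cvgMl.
- by rewrite -(mul0r entropy_p); apply: cvgMl.
Qed.

End MarkovShift.

Theorem proposition5p10 (R : realType) (A : finType) (p : A -> R) (P : A -> A -> R) :
  stochastic_matrix P -> stationary_prob_vector p P ->
  let c := fun (n : nat) (_ : {set 'I_n}) => (2 : R) ^- n in
  let F := fun i : nat => (2 : R) ^- i * H_alpha_given_alpha_i p P i in
  cvgn (fun N : nat => \sum_(1 <= i < N) F i) /\
  asc_seq p P c @ \oo --> 2^-1 * limn (fun N : nat => \sum_(1 <= i < N) F i).
Proof.
move=> HP Hp c F; have cvg_series := is_cvg_cond_series HP Hp.
split; first exact: cvg_series.
set l := limn _; rewrite (eq_cvg _ _ (asc_seqE HP Hp)) -(addr0 (2^-1 * l)).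
apply: cvgD; last exact: cvg_asc_remainder.
by apply: cvgMr; rewrite (cvg_shiftS (cond_series p P)).
Qed.
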